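(* Let $n\ge 1$ and let $B=\prod_{i=1}^n[a_i,b_i]\subseteq\mathbb{R}^n$ (with $a_i<b_i$) be an $n$-dimensional box, and let $V$ be its set of $2^n$ vertices. Let $0\le k<n$. Then there exists a (non-unique) subset $U\subseteq V$ with $|U|=\sum_{i=0}^k\binom{n}{i}$ such that $\deg(U\to v)=k$ for every $v\in V\setminus U$.
   Context: All polynomials are real polynomials in $n$ variables. For a set $S\subseteq\mathbb{R}^n$ and a point $t\in\mathbb{R}^n$, $\deg(S\to t)$ denotes the maximal integer $k$ such that every polynomial of degree at most $k$ which vanishes on every point of $S$ also vanishes at $t$ (equivalently, the values of any polynomial of degree at most $k$ on $S$ determine its value at $t$). *)

From HB Require Import structures.
From mathcomp Require Import all_boot all_order all_algebra.
From mathcomp Require Import reals.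
From mathcomp Require Import mpoly.
Set Implicit Arguments. Unset Strict Implicit. Unset Printing Implicit Defensive.
Import Order.TTheory GRing.Theory Num.Theory.
Local Open Scope ring_scope.

(* Every polynomial of total degree at most k vanishing on S vanishes at t.
   (The zero polynomial has msize 0; msize p = 1 + total degree otherwise.) *)
Definition deg_to_ge (R : realType) (n : nat) (S : ('I_n -> R) -> Prop)
    (t : 'I_n -> R) (k : nat) : Prop :=
  forall p : {mpoly R[n]}, (msize p <= k.+1)%N ->
    (forall x, S x -> p.@[x] = 0) -> p.@[t] = 0.

Definition deg_to_eq (R : realType) (n : nat) (S : ('I_n -> R) -> Prop)
    (t : 'I_n -> R) (k : nat) : Prop :=
  deg_to_ge S t k /\ (forall m : nat, deg_to_ge S t m -> (m <= k)%N).

Definition box_vertex (R : realType) (n : nat) (a b : 'I_n -> R)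
    (s : {ffun 'I_n -> bool}) : 'I_n -> R :=
  fun i => if s i then b i else a i.

From HB Require Import structures.
From mathcomp Require Import all_boot all_order all_algebra.
From mathcomp Require Import reals.
From mathcomp Require Import mpoly.
From mathcomp Require Import zify.
Import Order.TTheory GRing.Theory Num.Theory.
Local Open Scope ring_scope.
Set Implicit Arguments. Unset Strict Implicit. Unset Printing Implicit Defensive.

(* Index vertices by the set of coordinates equal to b_i, and let U be the
   vertices whose set has at most k elements.

   A polynomial p of degree at most k vanishing on U vanishes at every vertex:
   for a vertex with coordinate set T, #|T| > k, the alternating sum of p over
   the vertices with coordinate sets S included in T is an iterated finite
   difference in the #|T| directions of T, so it kills every monomial of
   degree < #|T|; by induction on #|T| all terms but the one at T vanish.

   Conversely, if v is outside U, choose k+1 coordinates i at which v_i = b_i: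
   the product of the x_i - a_i has degree k+1, vanishes on U (every vertex of
   U has x_i = a_i for one of them) but not at v. *)

Section SetToggle.

Variable T : finType.
Implicit Types (i j : T) (A S : {set T}).

Definition set_toggle i S := if i \in S then S :\ i else i |: S.

Lemma set_toggleK i : involutive (set_toggle i).
Proof.
move=> S; rewrite /set_toggle; have [iS|iS] := boolP (i \in S).
  by rewrite !inE eqxx /= setD1K.
by rewrite !inE eqxx /= setU1K.
Qed.

Lemma in_set_toggle i j S : j != i -> (j \in set_toggle i S) = (j \in S).
Proof. by move=> ji; rewrite /set_toggle; case: ifP => _; rewrite !inE (negPf ji). Qed.

Lemma in_set_toggle_id i S : (i \in set_toggle i S) = (i \notin S).
Proof. by rewrite /set_toggle; case: ifP => iS; rewrite !inE eqxx ?iS. Qed.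

Lemma sign_card_set_toggle (R : pzRingType) i S :
  (-1) ^+ #|set_toggle i S| = - (-1) ^+ #|S| :> R.
Proof.
rewrite /set_toggle; have [iS|iS] := boolP (i \in S).
  by rewrite [in RHS](cardsD1 i S) iS exprS mulN1r opprK.
by rewrite cardsU1 iS exprS mulN1r.
Qed.

Lemma subset_set_toggle i A S :
  i \in A -> (set_toggle i S \subset A) = (S \subset A).
Proof.
move=> iA; rewrite /set_toggle; have [iS|iS] := boolP (i \in S).
  apply/idP/idP => [|SA]; last exact: subset_trans (subsetDl S [set i]) SA.
  by rewrite -{2}(setD1K iS) subUset sub1set iA.
by rewrite subUset sub1set iA.
Qed.

Lemma sum_powerset_sign_eq0 (R : pzRingType) i A (f : {set T} -> R) :
  i \in A -> (forall S, f (set_toggle i S) = f S) ->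
  \sum_(S in powerset A) (-1) ^+ #|S| * f S = 0.
Proof.
move=> iA fT; rewrite (bigID (fun S => i \in S)) /=.
rewrite (reindex_inj (can_inj (set_toggleK i))) /=.
apply/eqP; rewrite addr_eq0 -sumrN; apply/eqP.
apply: eq_big => [S|S _].
  by rewrite !powersetE subset_set_toggle ?in_set_toggle_id.
by rewrite sign_card_set_toggle fT mulNr.
Qed.

End SetToggle.

Section SetFfun.

Variable T : finType.

Definition ffun_of_set (S : {set T}) : {ffun T -> bool} := [ffun j => j \in S].
Definition set_of_ffun (u : {ffun T -> bool}) : {set T} := [set j | u j].

Lemma ffun_of_setK : cancel ffun_of_set set_of_ffun.
Proof. by move=> S; apply/setP => j; rewrite inE ffunE. Qed.

Lemma ffun_of_set_inj : injective ffun_of_set.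
Proof. exact: can_inj ffun_of_setK. Qed.

Lemma set_of_ffunK : cancel set_of_ffun ffun_of_set.
Proof. by move=> u; apply/ffunP => j; rewrite !ffunE inE. Qed.

End SetFfun.

Arguments ffun_of_set {T} S.
Arguments set_of_ffun {T} u.

Lemma exists_subset_card (T : finType) (A : {set T}) m :
  (m <= #|A|)%N -> exists2 S : {set T}, S \subset A & #|S| = m.
Proof.
elim: m => [|m IH] mA; first by exists set0; rewrite ?sub0set ?cards0.
have [S SA cardS] := IH (ltnW mA).
have : (0 < #|A :\: S|)%N by have := cardsID S A; rewrite (setIidPr SA) cardS; lia.
rewrite card_gt0 => /set0Pn [j]; rewrite inE => /andP[jS jA].
by exists (j |: S); rewrite ?subUset ?sub1set ?jA ?SA // cardsU1 jS cardS.
Qed.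

Lemma card_small_sets (T : finType) k :
  #|[set A : {set T} | (#|A| <= k)%N]| = (\sum_(i < k.+1) 'C(#|T|, i))%N.
Proof.
elim: k => [|k IH].
  by rewrite big_ord1 -card_draws; apply: eq_card => A; rewrite !inE leqn0.
rewrite big_ord_recr /= -IH -card_draws.
rewrite -(cardsID [set A : {set T} | (#|A| <= k)%N] [set A : {set T} | (#|A| <= k.+1)%N]).
congr (_ + _)%N.
  by apply: eq_card => A; rewrite !inE andb_idl // => /leqW.
by apply: eq_card => A; rewrite !inE -ltnNge -eqn_leq.
Qed.

Lemma exists_mnm_eq0 n (m : 'X_{1..n}) (A : {set 'I_n}) :
  (mdeg m < #|A|)%N -> exists2 i, i \in A & m i = 0%N.
Proof.
move=> ltmA.
have [i /andP[iA /eqP mi0]|m_pos] := pickP [pred i | (i \in A) && (m i == 0%N)].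
  by exists i.
suff : (#|A| <= mdeg m)%N by rewrite leqNgt ltmA.
rewrite mdegE (bigID (mem A)) /= -sum1_card.
apply: leq_trans (leq_addr _ _); apply: leq_sum => j jA.
by move: (m_pos j); rewrite /= jA lt0n => /negbT.
Qed.

Section FiniteDifference.

Variables (R : comNzRingType) (n : nat) (a b : 'I_n -> R).

Definition set_vertex (S : {set 'I_n}) : 'I_n -> R :=
  fun j => if j \in S then b j else a j.

Lemma sum_powerset_meval_eq0 (A : {set 'I_n}) (p : {mpoly R[n]}) :
  (msize p <= #|A|)%N ->
  \sum_(S in powerset A) (-1) ^+ #|S| * p.@[set_vertex S] = 0.
Proof.
move=> szp; under eq_bigr do rewrite mevalE mulr_sumr.
rewrite exchange_big big1_seq // => m /andP[_ mp].
have [i iA mi0] := exists_mnm_eq0 (leq_trans (msize_mdeg_lt mp) szp).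
under eq_bigr do rewrite mulrCA.
rewrite -mulr_sumr (sum_powerset_sign_eq0 iA) ?mulr0 // => S.
apply: eq_bigr => j _; have [->|ji] := eqVneq j i; first by rewrite mi0 !expr0.
by rewrite /set_vertex in_set_toggle.
Qed.

Lemma meval_set_vertex_eq0 k (p : {mpoly R[n]}) :
  (msize p <= k.+1)%N ->
  (forall S : {set 'I_n}, (#|S| <= k)%N -> p.@[set_vertex S] = 0) ->
  forall T : {set 'I_n}, p.@[set_vertex T] = 0.
Proof.
move=> szp p0 T; move: {2}#|T|.+1 (ltnSn #|T|) => N.
elim: N T => // N IH T ltTN; have [Tk|kT] := leqP #|T| k; first exact: p0.
have := sum_powerset_meval_eq0 (leq_trans szp kT).
rewrite (bigD1 T) ?powersetE //= big1 ?addr0 => [|S /andP[]].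
  by move/(congr1 ( *%R ((-1) ^+ #|T|))); rewrite signrMK mulr0.
rewrite powersetE => ST SnT.
have /proper_card ltST : S \proper T by rewrite properEneq SnT.
by rewrite IH ?mulr0 //; lia.
Qed.

End FiniteDifference.

Section ProdXsubC.

Variable n : nat.

Lemma meval_prod_XsubC (R : comNzRingType) (c x : 'I_n -> R) (r : seq 'I_n) :
  (\prod_(i <- r) ('X_i - (c i)%:MP)).@[x] = \prod_(i <- r) (x i - c i).
Proof.
by rewrite rmorph_prod; apply: eq_bigr => i _ /=; rewrite mevalB mevalXU mevalC.
Qed.

Lemma prod_XsubC_neq0 (R : comNzRingType) (c : 'I_n -> R) (r : seq 'I_n) :
  \prod_(i <- r) ('X_i - (c i)%:MP) != 0.
Proof.
apply: contraTneq isT => p0.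
have := meval_prod_XsubC c (fun i => c i + 1) r.
rewrite p0 meval0 big1 => [/esym/eqP|j _]; first by rewrite oner_eq0.
by rewrite addrAC subrr add0r.
Qed.

Lemma msize_prod_XsubC (R : idomainType) (c : 'I_n -> R) (r : seq 'I_n) :
  (msize (\prod_(i <- r) ('X_i - (c i)%:MP)) <= (size r).+1)%N.
Proof.
elim: r => [|i r IH]; first by rewrite big_nil msize1.
have szXi : (msize ('X_i - (c i)%:MP : {mpoly R[n]}) <= 2)%N.
  apply: leq_trans (msizeD_le _ _) _; rewrite msizeN msizeX mdeg1 msizeC.
  by rewrite geq_max leqnn; case: (_ != _).
have := prod_XsubC_neq0 c [:: i]; rewrite big_seq1 => Xi_neq0.
rewrite big_cons msizeM ?prod_XsubC_neq0 //= -subn1 leq_subLR.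
exact: leq_add szXi IH.
Qed.

End ProdXsubC.

Section BoxVertices.

Variables (R : realType) (n : nat) (a b : 'I_n -> R).
Hypothesis lt_ab : forall i, a i < b i.

Definition box_vertices (U : {set {ffun 'I_n -> bool}}) : ('I_n -> R) -> Prop :=
  fun x => exists2 u, u \in U & x = box_vertex a b u.

Definition low_vertices k : {set {ffun 'I_n -> bool}} :=
  ffun_of_set @: [set S : {set 'I_n} | (#|S| <= k)%N].

Lemma mem_low_vertices k v : (v \in low_vertices k) = (#|set_of_ffun v| <= k)%N.
Proof.
by rewrite -[v in LHS]set_of_ffunK mem_imset ?inE //; apply: ffun_of_set_inj.
Qed.

Lemma box_vertexE u : box_vertex a b u =1 set_vertex a b (set_of_ffun u).
Proof. by move=> j; rewrite /box_vertex /set_vertex inE. Qed.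

Lemma card_low_vertices k :
  #|low_vertices k| = (\sum_(i < k.+1) 'C(n, i))%N.
Proof.
by rewrite card_imset ?card_small_sets ?card_ord //; apply: ffun_of_set_inj.
Qed.

Lemma deg_to_ge_low_vertices k v :
  deg_to_ge (box_vertices (low_vertices k)) (box_vertex a b v) k.
Proof.
move=> p szp p0; rewrite (meval_eq _ (box_vertexE v)).
apply: (meval_set_vertex_eq0 szp) => S cardS.
rewrite -(ffun_of_setK S) -(meval_eq _ (box_vertexE _)); apply: p0.
by exists (ffun_of_set S); rewrite ?imset_f ?inE.
Qed.

Lemma deg_to_ge_low_vertices_le k m v : (k < #|set_of_ffun v|)%N ->
  deg_to_ge (box_vertices (low_vertices k)) (box_vertex a b v) m -> (m <= k)%N.
Proof.
move=> kv degm; rewrite leqNgt; apply/negP => km.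
have [S Sv cardS] := exists_subset_card kv.
pose q : {mpoly R[n]} := \prod_(i <- enum S) ('X_i - (a i)%:MP).
have szq : (msize q <= m.+1)%N.
  by apply: leq_trans (msize_prod_XsubC _ _) _; rewrite -cardE cardS.
have qv : q.@[box_vertex a b v] != 0.
  rewrite meval_prod_XsubC prodf_seq_neq0; apply/allP => j; rewrite mem_enum => jS.
  have : j \in set_of_ffun v by apply: (subsetP Sv).
  by rewrite inE /box_vertex => -> /=; rewrite subr_eq0 gt_eqF.
suff : q.@[box_vertex a b v] = 0 by move/eqP; rewrite (negPf qv).
apply: (degm q szq) => _ [_ /imsetP[A cardA ->] ->].
rewrite meval_prod_XsubC; apply/eqP.
rewrite prodf_seq_eq0; have /subsetPn [j jS jA] : ~~ (S \subset A).
  by apply: contraTN cardA => /subset_leq_card; rewrite inE cardS -ltnNge.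
apply/hasP; exists j; first by rewrite mem_enum.
by rewrite /box_vertex ffunE (negPf jA) subrr eqxx.
Qed.

End BoxVertices.

Theorem theorem2 (R : realType) (n : nat) (a b : 'I_n -> R) (k : nat) :
  (1 <= n)%N -> (forall i, a i < b i) -> (k < n)%N ->
  exists U : {set {ffun 'I_n -> bool}},
    #|U| = (\sum_(i < k.+1) 'C(n, i))%N /\
    forall v : {ffun 'I_n -> bool}, v \notin U ->
      deg_to_eq (fun x => exists2 u, u \in U & x = box_vertex a b u)
                (box_vertex a b v) k.
Proof.
move=> _ lt_ab _; exists (low_vertices n k); split; first exact: card_low_vertices.
move=> v vU; split; first exact: deg_to_ge_low_vertices.
move=> m; apply: (deg_to_ge_low_vertices_le lt_ab).
by rewrite ltnNge -mem_low_vertices.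
Qed.
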